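(* In the setting described in the context, for every $k\in\{1,\dots,p\}$ the function $\delta_k$ belongs to $\mathcal F$, and for every $k\in\{2,\dots,p\}$ the function $f_k$ belongs to $\mathcal F$.
   Context: Let $p\ge1$, $\bar{\boldsymbol y}\in\mathbb R^p$, weights $n_1,\dots,n_p\ge1$, and $\tilde\lambda_0,\tilde\lambda\ge0$. For $i\in[p]$ let $e_i(x)=-\frac{n_i}{2}(x-\bar y_i)^2+\tilde\lambda_0\mathbf 1(x=0)$, $x\in\mathbb R$ ($\mathbf 1$ the indicator). Define recursively $\delta_1=e_1$ and, for $k=2,\dots,p$, $f_k(b)=\sup_{\tilde b\in\mathbb R}\big[\delta_{k-1}(\tilde b)-\tilde\lambda\mathbf 1(b\ne\tilde b)\big]$ (equivalently $\max\{\delta_{k-1}(b),\sup_{\tilde b}\delta_{k-1}(\tilde b)-\tilde\lambda\}$) and $\delta_k=e_k+f_k$. Let $\mathcal Q$ be the set of piecewise quadratic functions $x\mapsto\sum_{i=1}^{m+1}\mathbf 1(x\in(x_{i-1},x_i])(a_ix^2+b_ix+c_i)$ with $m\ge0$, $-\infty=x_0\le x_1\le\dots\le x_{m+1}=\infty$ and real $a_i,b_i,c_i$. Let $\mathcal S$ be the set of positive spike functions $x\mapsto\sum_{i=1}^{m}s_i\mathbf 1(x=x_i)$ with $m\ge0$, $x_i\in\mathbb R$, $s_i>0$. Let $\mathcal F=\{Q+S:Q\in\mathcal Q,S\in\mathcal S\}$. *)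

From HB Require Import structures.
From mathcomp Require Import all_boot all_order all_algebra.
From mathcomp Require Import all_classical all_reals.
From mathcomp Require Import ereal.
Set Implicit Arguments. Unset Strict Implicit. Unset Printing Implicit Defensive.
Import Order.TTheory GRing.Theory Num.Theory.
Local Open Scope ring_scope.
Local Open Scope classical_set_scope.

Section Defs.
Variable R : realType.

Definition ind (b : bool) : R := (b%:R : R).

(* e_i(x) = -(n_i/2)(x - ybar_i)^2 + lam0 * 1(x = 0) ; indices i are 1-based *)
Definition efun (ybar : nat -> R) (n : nat -> nat) (lam0 : R) (i : nat) (x : R) : R :=
  - ((n i)%:R / 2) * (x - ybar i) ^+ 2 + lam0 * ind (x == 0).

Definition fstep (lam : R) (g : R -> R) (b : R) : R :=
  sup (range (fun bt : R => g bt - lam * ind (b != bt))).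

(* delta_k for k >= 1 (delta 0 is a dummy value, never used) *)
Fixpoint delta (ybar : nat -> R) (n : nat -> nat) (lam0 lam : R) (k : nat)
  : R -> R :=
  match k with
  | 0 => fun _ => 0
  | 1 => efun ybar n lam0 1
  | S ((S _) as k') => fun x =>
      efun ybar n lam0 k x + fstep lam (delta ybar n lam0 lam k') x
  end.

(* f_k = fstep (delta_{k-1}) , used for k >= 2 *)
Definition fk (ybar : nat -> R) (n : nat -> nat) (lam0 lam : R) (k : nat)
  : R -> R := fstep lam (delta ybar n lam0 lam k.-1).

Definition piecewise_quadratic (g : R -> R) : Prop :=
  exists (m : nat) (xs : nat -> \bar R) (a b c : nat -> R),
    [/\ xs 0 = -oo%E, xs m.+1 = +oo%E,
        (forall i, (i <= m)%N -> (xs i <= xs i.+1)%E) &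
        forall x : R, g x = \sum_(1 <= i < m.+2)
          ind ((xs i.-1 < x%:E)%E && (x%:E <= xs i)%E) *
          (a i * x ^+ 2 + b i * x + c i)].

Definition positive_spikes (g : R -> R) : Prop :=
  exists (m : nat) (xs s : nat -> R),
    (forall i, (1 <= i <= m)%N -> 0 < s i) /\
    forall x : R, g x = \sum_(1 <= i < m.+1) s i * ind (x == xs i).

Definition classF (g : R -> R) : Prop :=
  exists Q S : R -> R, [/\ piecewise_quadratic Q, positive_spikes S &
                          forall x, g x = Q x + S x].
End Defs.

From HB Require Import structures.
From mathcomp Require Import all_boot all_order all_algebra.
From mathcomp Require Import all_classical all_reals ereal.
From mathcomp Require Import ring lra zify.
Import Order.TTheory GRing.Theory Num.Theory.
Local Open Scope ring_scope.
Set Implicit Arguments. Unset Strict Implicit. Unset Printing Implicit Defensive.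

(* Write delta_k = Q + S with Q piecewise quadratic and S a finite sum of
   nonnegative spikes.  As delta_(k-1) is bounded above and lam >= 0,
   f_k b = max (delta_(k-1) b) (sup delta_(k-1) - lam), so it suffices that this
   class contains each e_i and is closed under sums and under g |-> max g C.
   For the latter, max (Q + S) C = max Q C + (max (Q + S) C - max Q C), where the
   correction is nonnegative and vanishes off the spikes of S; and max Q C is
   again piecewise quadratic, because on each piece q - C changes sign at most
   at its two real roots. *)

Section SwitchedQuadratic.
Variable R : realType.
Implicit Types (q r : R * R * R) (t x C : R) (f g : R -> R).

Definition qeval q x : R := q.1.1 * x ^+ 2 + q.1.2 * x + q.2.
Definition qadd q r : R * R * R := (q.1.1 + r.1.1, q.1.2 + r.1.2, q.2 + r.2).
Definition qopp q : R * R * R := (- q.1.1, - q.1.2, - q.2).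

Lemma qevalD q r x : qeval (qadd q r) x = qeval q x + qeval r x.
Proof. rewrite /qeval /=; ring. Qed.

Lemma qevalN q x : qeval (qopp q) x = - qeval q x.
Proof. rewrite /qeval /=; ring. Qed.

Lemma mulr_ind_le a (b : bool) : 0 <= a -> a * ind R b <= a.
Proof. by rewrite /ind; case: b; rewrite ?mulr1 ?mulr0. Qed.

(* A piecewise quadratic written as q0 + sum of the quadratics q switched on at
   thresholds t, for (t, q) in L.  Unlike the sorted-breakpoint form of
   [piecewise_quadratic] this form is closed under sums; breakpoints are sorted
   only once, in [switched_quadratic_piecewise]. *)
Definition switched_sum q0 (L : seq (R * (R * R * R))) x : R :=
  qeval q0 x + \sum_(u <- L) ind R (u.1 < x) * qeval u.2 x.

Definition switched_quadratic g := exists q0 L, g =1 switched_sum q0 L.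

Lemma switched_sum_cons q0 u L x :
  switched_sum q0 (u :: L) x =
  if u.1 < x then switched_sum (qadd q0 u.2) L x else switched_sum q0 L x.
Proof.
rewrite /switched_sum big_cons /ind; case: ifP => _; rewrite ?qevalD /=; ring.
Qed.

Lemma eq_switched_quadratic f g : f =1 g -> switched_quadratic f -> switched_quadratic g.
Proof. by move=> fg [q0 [L fE]]; exists q0, L => x; rewrite -fg. Qed.

Lemma switched_quadratic_qeval q : switched_quadratic (qeval q).
Proof. by exists q, [::] => x; rewrite /switched_sum big_nil addr0. Qed.

Lemma switched_quadratic_cst C : switched_quadratic (fun=> C).
Proof.
apply: eq_switched_quadratic (switched_quadratic_qeval (0, 0, C)) => x.
by rewrite /qeval /=; ring.
Qed.

Lemma switched_quadraticD f g : switched_quadratic f -> switched_quadratic g ->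
  switched_quadratic (f \+ g).
Proof.
move=> [q1 [L1 fE]] [q2 [L2 gE]]; exists (qadd q1 q2), (L1 ++ L2) => x.
rewrite /= fE gE /switched_sum big_cat qevalD /=; ring.
Qed.

Lemma switched_quadraticN f : switched_quadratic f -> switched_quadratic (\- f).
Proof.
move=> [q [L fE]]; exists (qopp q), [seq (u.1, qopp u.2) | u <- L] => x.
rewrite /= fE /switched_sum big_map qevalN opprD -sumrN.
by congr (_ + _); apply: eq_bigr => u _; rewrite qevalN mulrN.
Qed.

Lemma switched_quadratic_indM t f : switched_quadratic f ->
  switched_quadratic (fun x => ind R (t < x) * f x).
Proof.
move=> [q [L fE]]; exists (0, 0, 0), ((t, q) :: [seq (Num.max t u.1, u.2) | u <- L]).
move=> x; rewrite fE /switched_sum big_cons big_map mulrDr mulr_sumr.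
have -> : qeval (0, 0, 0) x = 0 by rewrite /qeval /=; ring.
rewrite add0r; congr (_ + _).
by apply: eq_bigr => u _; rewrite mulrA gt_max /ind; case: (t < x); rewrite ?mul1r ?mul0r.
Qed.

Lemma switched_quadratic_glue t f g :
  switched_quadratic f -> switched_quadratic g ->
  switched_quadratic (fun x => if t < x then g x else f x).
Proof.
move=> qf qg; have qgf : switched_quadratic (g \+ \- f).
  by apply: switched_quadraticD => //; apply: switched_quadraticN.
apply: eq_switched_quadratic (switched_quadraticD qf (switched_quadratic_indM t qgf)).
by move=> x /=; rewrite /ind; case: ifP => _ /=; ring.
Qed.

Lemma max0_opp x : Num.max x 0 = x + Num.max (- x) 0.
Proof.
case: (lerP x 0) => hx; first by rewrite max_l ?oppr_ge0 //; ring.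
by rewrite max_r ?addr0 // oppr_le0 ltW.
Qed.

Lemma switched_quadratic_max0_opp f : switched_quadratic f ->
  switched_quadratic (fun x => Num.max (- f x) 0) ->
  switched_quadratic (fun x => Num.max (f x) 0).
Proof.
move=> qf qfN; apply: eq_switched_quadratic (switched_quadraticD qf qfN) => x.
by rewrite /= -max0_opp.
Qed.

Lemma switched_quadratic_max0_linear b c : 0 < b ->
  switched_quadratic (fun x => Num.max (qeval (0, b, c) x) 0).
Proof.
move=> b_gt0; set r := - c / b.
have qE x : qeval (0, b, c) x = b * (x - r).
  by rewrite /qeval /r /=; field; rewrite gt_eqF.
apply: eq_switched_quadratic
  (switched_quadratic_glue r (switched_quadratic_cst 0) (switched_quadratic_qeval (0, b, c))).
move=> x; rewrite qE; case: (ltrP r x) => hx; first by rewrite max_l //; nra.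
by rewrite max_r //; nra.
Qed.

Lemma switched_quadratic_max0_convex a b c : 0 < a ->
  switched_quadratic (fun x => Num.max (qeval (a, b, c) x) 0).
Proof.
move=> a_gt0; have qq := switched_quadratic_qeval (a, b, c).
set D := b ^+ 2 - 4 * a * c.
have qE x : 4 * a * qeval (a, b, c) x = (2 * a * x + b) ^+ 2 - D.
  by rewrite /qeval /D /=; ring.
have [D_le0|D_gt0] := lerP D 0.
  apply: eq_switched_quadratic qq => x; rewrite max_l //.
  by have := qE x; have := sqr_ge0 (2 * a * x + b); nra.
set s := Num.sqrt D; have s_gt0 : 0 < s by rewrite sqrtr_gt0.
have sE : s ^+ 2 = D by rewrite sqr_sqrtr // ltW.
set r1 := (- b - s) / (2 * a); set r2 := (- b + s) / (2 * a).
have a_neq0 : a != 0 by rewrite gt_eqF.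
have rootsE x : qeval (a, b, c) x = a * ((x - r1) * (x - r2)).
  apply: (@mulfI _ (4 * a)); first by rewrite mulf_neq0.
  by rewrite qE -sE /r1 /r2; field.
have r12 : r1 < r2 by rewrite /r1 /r2 ltr_pM2r ?invr_gt0 ?mulr_gt0 //; lra.
apply: eq_switched_quadratic (switched_quadratic_glue r1 qq
  (switched_quadratic_glue r2 (switched_quadratic_cst 0) qq)).
move=> x; rewrite rootsE; case: (ltrP r1 x) => h1; last first.
  by rewrite max_l // pmulr_rge0 //; nra.
case: (ltrP r2 x) => h2; first by rewrite max_l // pmulr_rge0 //; nra.
by rewrite max_r // pmulr_rle0 //; nra.
Qed.

Lemma switched_quadratic_max0_qeval q :
  switched_quadratic (fun x => Num.max (qeval q x) 0).
Proof.
have by_opp q' : switched_quadratic (fun x => Num.max (qeval (qopp q') x) 0) ->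
    switched_quadratic (fun x => Num.max (qeval q' x) 0).
  move=> qN; apply: switched_quadratic_max0_opp; first exact: switched_quadratic_qeval.
  by apply: eq_switched_quadratic qN => x; rewrite qevalN.
case: q => [[a b] c]; have [a_lt0|a_gt0|->] := ltrgtP a 0.
- by apply: by_opp; apply: switched_quadratic_max0_convex; rewrite oppr_gt0.
- exact: switched_quadratic_max0_convex.
have [b_lt0|b_gt0|->] := ltrgtP b 0.
- apply: by_opp; rewrite /qopp /= oppr0.
  by apply: switched_quadratic_max0_linear; rewrite oppr_gt0.
- exact: switched_quadratic_max0_linear.
apply: eq_switched_quadratic (switched_quadratic_cst (Num.max c 0)) => x.
by rewrite /qeval /= !mul0r !add0r.
Qed.

Lemma switched_quadratic_max_qeval q C :
  switched_quadratic (fun x => Num.max (qeval q x) C).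
Proof.
have qC := switched_quadratic_max0_qeval (qadd q (0, 0, - C)).
have shiftE x : qeval (qadd q (0, 0, - C)) x = qeval q x - C.
  by rewrite qevalD /qeval /=; ring.
apply: eq_switched_quadratic (switched_quadraticD (switched_quadratic_cst C) qC) => x.
rewrite /= shiftE; case: (lerP (qeval q x) C) => h.
  by rewrite max_r ?addr0 // subr_le0.
by rewrite max_l ?subr_ge0 ?ltW //; ring.
Qed.

Lemma switched_quadratic_max f C : switched_quadratic f ->
  switched_quadratic (fun x => Num.max (f x) C).
Proof.
move=> [q0 [L fE]].
apply: (eq_switched_quadratic (f := fun x => Num.max (switched_sum q0 L x) C)).
  by move=> x; rewrite fE.
elim: L q0 {fE} => [|u L IH] q0.
  by apply: eq_switched_quadratic (switched_quadratic_max_qeval q0 C) => x;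
    rewrite /switched_sum big_nil addr0.
apply: eq_switched_quadratic (switched_quadratic_glue u.1 (IH q0) (IH (qadd q0 u.2))).
by move=> x; rewrite switched_sum_cons; case: ifP.
Qed.

End SwitchedQuadratic.

Section Breakpoints.
Variable R : realType.
Implicit Types (q : R * R * R) (t x T : R) (f g : R -> R).

Definition pieces m (xs : nat -> \bar R) (cf : nat -> R * R * R) x : R :=
  \sum_(1 <= i < m.+2)
    ind R ((xs i.-1 < x%:E)%E && (x%:E <= xs i)%E) * qeval (cf i) x.

(* All finite breakpoints are at most T, so a last piece may be appended on (T, +oo). *)
Definition piecewise_quadratic_upto T g := exists m xs cf,
  [/\ xs 0%N = -oo%E, xs m.+1 = +oo%E, (forall i, (i <= m)%N -> (xs i <= xs i.+1)%E),
      (xs m <= T%:E)%E & g =1 pieces m xs cf].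

Lemma piecewise_quadratic_uptoW T g :
  piecewise_quadratic_upto T g -> piecewise_quadratic g.
Proof.
move=> [m [xs [cf [xs0 xsm xs_mono _ gE]]]].
by exists m, xs, (fun i => (cf i).1.1), (fun i => (cf i).1.2), (fun i => (cf i).2).
Qed.

Lemma eq_piecewise_quadratic_upto T f g :
  f =1 g -> piecewise_quadratic_upto T f -> piecewise_quadratic_upto T g.
Proof.
move=> fg [m [xs [cf [xs0 xsm xs_mono xsT fE]]]].
by exists m, xs, cf; split => // x; rewrite -fg.
Qed.

Lemma piecewise_quadratic_upto_qeval T q : piecewise_quadratic_upto T (qeval q).
Proof.
exists 0%N, (fun i => if i == 0%N then -oo%E else +oo%E), (fun=> q); split => //=.
- by move=> i; rewrite leqn0 => /eqP ->.
- exact: leNye.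
- by move=> x; rewrite /pieces big_nat1 /= ltNye leey /ind mul1r.
Qed.

Lemma piecewise_quadratic_upto_le T T' g :
  T <= T' -> piecewise_quadratic_upto T g -> piecewise_quadratic_upto T' g.
Proof.
move=> TT' [m [xs [cf [xs0 xsm xs_mono xsT gE]]]].
by exists m, xs, cf; split => //; apply: le_trans xsT _; rewrite lee_fin.
Qed.

Lemma piecewise_quadratic_upto_switch t q g : piecewise_quadratic_upto t g ->
  piecewise_quadratic_upto t (fun x => g x + ind R (t < x) * qeval q x).
Proof.
move=> [m [xs [cf [xs0 xsm xs_mono xst gE]]]].
(* t becomes breakpoint m+1; the new last piece (t, +oo) carries cf m.+1 + q. *)
pose xs' i := if (i <= m)%N then xs i else if i == m.+1 then t%:E else +oo%E.
pose cf' i := if (i <= m.+1)%N then cf i else qadd (cf m.+1) q.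
exists m.+1, xs', cf'; split.
- by rewrite /xs' leq0n.
- by rewrite /xs' !ifF //; lia.
- move=> i i_le; rewrite /xs'; case: (ltngtP i m) => [i_lt_m|i_gt_m|->].
  + exact/xs_mono/ltnW.
  + have -> : i = m.+1 by lia.
    by rewrite eqxx ifF ?leey //; lia.
  + by rewrite eqxx.
- by rewrite /xs' ltnn eqxx.
have xs'm : xs' m = xs m by rewrite /xs' leqnn.
have xs'm1 : xs' m.+1 = t%:E by rewrite /xs' ltnn eqxx.
have xs'm2 : xs' m.+2 = +oo%E by rewrite /xs' !ifF //; lia.
have cf'm1 : cf' m.+1 = cf m.+1 by rewrite /cf' leqnn.
have cf'm2 : cf' m.+2 = qadd (cf m.+1) q by rewrite /cf' ltnn.
move=> x /=; rewrite gE /pieces big_nat_recr //= [RHS]big_nat_recr //=.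
rewrite [X in _ = X + _]big_nat_recr //= -!addrA; congr (_ + _).
  apply: eq_big_nat => i /andP [_]; rewrite ltnS => i_le_m.
  by rewrite /xs' /cf' i_le_m (leq_trans (leq_pred i) i_le_m) (leqW i_le_m).
rewrite xs'm xs'm1 xs'm2 cf'm1 cf'm2 xsm qevalD !leey !andbT lte_fin lee_fin /ind.
case: (ltrP t x) => [tx | xt] /=.
  by rewrite (le_lt_trans xst) ?lte_fin //= mul1r mul0r; ring.
by rewrite andbT mul0r; ring.
Qed.

(* Sorting by decreasing threshold puts the rightmost breakpoint at the head. *)
Lemma sorted_switched_sum_upto q0 L T :
  sorted (relpre fst >=%R) L -> all (fun u => u.1 <= T) L ->
  piecewise_quadratic_upto T (switched_sum q0 L).
Proof.
elim: L T => [|u L IH] T /=.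
  move=> _ _; apply: eq_piecewise_quadratic_upto (piecewise_quadratic_upto_qeval T q0).
  by move=> x; rewrite /switched_sum big_nil addr0.
rewrite path_sortedE; last exact: relpre_trans (@ge_trans _ R).
move=> /andP [L_le_u sorted_L] /andP [uT _].
apply: piecewise_quadratic_upto_le uT _.
apply: eq_piecewise_quadratic_upto (piecewise_quadratic_upto_switch u.2 (IH _ sorted_L L_le_u)).
by move=> x; rewrite /switched_sum big_cons /=; ring.
Qed.

Lemma switched_quadratic_piecewise g : switched_quadratic g -> piecewise_quadratic g.
Proof.
move=> [q0 [L gE]]; set L' := sort (relpre fst >=%R) L.
have sorted_L' : sorted (relpre fst >=%R) L' by apply: sort_sorted => u v; exact: le_total.
have L'_le_head : all (fun u => u.1 <= (head (0, q0) L').1) L'.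
  move: sorted_L'; case: L' => [|u L''] //=.
  rewrite path_sortedE; last exact: relpre_trans (@ge_trans _ R).
  by case/andP => L''_le_u _; rewrite lexx.
apply: piecewise_quadratic_uptoW.
apply: eq_piecewise_quadratic_upto (sorted_switched_sum_upto q0 sorted_L' L'_le_head).
by move=> x; rewrite gE /switched_sum (perm_big _ (permEl (perm_sort _ L))).
Qed.

End Breakpoints.

Section Spikes.
Variable R : realType.
Implicit Types (x C : R) (f g h : R -> R).

Definition spikes (L : seq (R * R)) x : R := \sum_(u <- L) u.2 * ind R (x == u.1).

Definition nonneg_spikes g := exists L, all (fun u => 0 <= u.2) L /\ g =1 spikes L.

Lemma spikes_ge0 L x : all (fun u => 0 <= u.2) L -> 0 <= spikes L x.
Proof.
move=> /allP L_ge0; rewrite /spikes big_seq sumr_ge0 // => u uL.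
by rewrite mulr_ge0 ?L_ge0 ?ler0n.
Qed.

Lemma spikes_out L x : x \notin [seq u.1 | u <- L] -> spikes L x = 0.
Proof.
move=> xL; rewrite /spikes big_seq big1 // => u uL.
suff /negbTE -> : x != u.1 by rewrite /ind mulr0.
by apply: contraNneq xL => ->; apply: map_f.
Qed.

Lemma spikes_support (D : seq R) h : uniq D -> {in [predC D], h =1 fun=> 0} ->
  h =1 spikes [seq (c, h c) | c <- D].
Proof.
move=> uD hD x; rewrite /spikes big_map; have [xD|xD] := boolP (x \in D).
  rewrite (bigD1_seq x) //= /ind eqxx mulr1 big1 ?addr0 // => c /negbTE cx.
  by rewrite eq_sym cx mulr0.
rewrite hD // big_seq big1 // => c cD.
suff /negbTE -> : x != c by rewrite /ind mulr0.
by apply: contraNneq xD => ->.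
Qed.

Lemma nonneg_spikes_positive g : nonneg_spikes g -> positive_spikes g.
Proof.
move=> [L [L_ge0 gE]]; set Lpos := [seq u <- L | 0 < u.2].
exists (size Lpos), (fun i => (nth (0, 0) Lpos i.-1).1), (fun i => (nth (0, 0) Lpos i.-1).2).
split.
  move=> i /andP [i_ge1 i_le]; have : nth (0, 0) Lpos i.-1 \in Lpos.
    by apply: mem_nth; rewrite prednK.
  by rewrite mem_filter => /andP [].
move=> x; rewrite gE /spikes big_add1 /=.
transitivity (\sum_(u <- Lpos) u.2 * ind R (x == u.1)); last by rewrite (big_nth (0, 0)).
rewrite big_filter [RHS]big_mkcond; apply: eq_big_seq => u uL /=; case: ifP => // /negbT.
by rewrite lt_neqAle (allP L_ge0 u uL) andbT negbK => /eqP <-; rewrite mul0r.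
Qed.

Definition quadratic_plus_spikes g :=
  exists Q S, [/\ switched_quadratic Q, nonneg_spikes S & g =1 Q \+ S].

Lemma eq_quadratic_plus_spikes f g :
  f =1 g -> quadratic_plus_spikes f -> quadratic_plus_spikes g.
Proof. by move=> fg [Q [S [qQ sS fE]]]; exists Q, S; split => // x; rewrite -fg. Qed.

Lemma quadratic_plus_spikes_classF g : quadratic_plus_spikes g -> classF g.
Proof.
move=> [Q [S [qQ sS gE]]]; exists Q, S; split => //.
- exact: switched_quadratic_piecewise.
- exact: nonneg_spikes_positive.
Qed.

Lemma quadratic_plus_spikesD f g : quadratic_plus_spikes f -> quadratic_plus_spikes g ->
  quadratic_plus_spikes (f \+ g).
Proof.
move=> [Q1 [S1 [qQ1 [L1 [L1_ge0 S1E]] fE]]] [Q2 [S2 [qQ2 [L2 [L2_ge0 S2E]] gE]]].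
exists (Q1 \+ Q2), (S1 \+ S2); split; first exact: switched_quadraticD.
  exists (L1 ++ L2); split; first by rewrite all_cat L1_ge0 L2_ge0.
  by move=> x; rewrite /= S1E S2E /spikes big_cat.
by move=> x; rewrite /= fE gE /=; ring.
Qed.

Lemma quadratic_plus_spikes_max g C : quadratic_plus_spikes g ->
  quadratic_plus_spikes (fun x => Num.max (g x) C).
Proof.
move=> [Q [S [qQ [L [L_ge0 SE]] gE]]].
pose S' x := Num.max (g x) C - Num.max (Q x) C.
have S'_ge0 x : 0 <= S' x.
  by rewrite subr_ge0 le_max2 // gE lerDl SE spikes_ge0.
set D := undup [seq u.1 | u <- L].
have S'_out : {in [predC D], S' =1 fun=> 0}.
  move=> x; rewrite inE mem_undup => xL.
  by rewrite /S' gE /= SE spikes_out // addr0 subrr.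
exists (fun x => Num.max (Q x) C), S'; split.
- exact: switched_quadratic_max.
- exists [seq (c, S' c) | c <- D]; split; last exact: spikes_support (undup_uniq _) S'_out.
  by apply/allP => _ /mapP [c _ ->]; apply: S'_ge0.
- by move=> x; rewrite /S' /=; ring.
Qed.

Lemma quadratic_plus_spikes_efun ybar n lam0 i : 0 <= lam0 ->
  quadratic_plus_spikes (efun ybar n lam0 i).
Proof.
move=> lam0_ge0; pose a := (n i)%:R / 2 : R.
exists (qeval (- a, 2 * a * ybar i, - a * ybar i ^+ 2)), (spikes [:: (0, lam0)]); split.
- exact: switched_quadratic_qeval.
- by exists [:: (0, lam0)]; rewrite /= lam0_ge0.
- by move=> x; rewrite /efun /= /qeval /spikes big_seq1 /a /=; ring.
Qed.

Lemma fstep_max lam g : 0 <= lam -> has_ubound (range g) ->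
  fstep lam g =1 fun b => Num.max (g b) (sup (range g) - lam).
Proof.
move=> lam_ge0 g_ub b; rewrite /fstep.
set E := range (fun bt => g bt - lam * ind R (b != bt)).
have g_le_sup x : g x <= sup (range g) by apply: ub_le_sup => //; exists x.
have gb_in_E : E (g b) by exists b => //; rewrite eqxx /ind mulr0 subr0.
have E_ub : has_ubound E.
  case: g_ub => M g_le_M; exists M => _ [x _ <-].
  have gx_le_M : g x <= M by apply: g_le_M; exists x.
  by apply: le_trans gx_le_M; rewrite gerBl mulr_ge0 ?ler0n.
apply/eqP; rewrite eq_le ge_max; apply/and3P; split.
- apply: ge_sup; first by exists (g b).
  move=> _ [x _ <-]; rewrite le_max; have [<-|bx] := eqVneq b x.
    by rewrite /ind mulr0 subr0 lexx.
  by rewrite /ind mulr1 lerB ?g_le_sup ?orbT.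
- exact: ub_le_sup E_ub _ gb_in_E.
- rewrite lerBlDr; apply: ge_sup; first by exists (g b), b.
  move=> _ [x _ <-]; rewrite -lerBlDr.
  have : g x - lam * ind R (b != x) <= sup E by apply: ub_le_sup => //; exists x.
  by apply: le_trans; rewrite lerB ?mulr_ind_le.
Qed.

Lemma fstep_ubound lam g : 0 <= lam -> has_ubound (range g) -> has_ubound (range (fstep lam g)).
Proof.
move=> lam_ge0 g_ub; exists (sup (range g)) => _ [b _ <-].
rewrite fstep_max // ge_max gerBl lam_ge0 andbT.
by apply: ub_le_sup => //; exists b.
Qed.

Lemma quadratic_plus_spikes_fstep lam g : 0 <= lam -> has_ubound (range g) ->
  quadratic_plus_spikes g -> quadratic_plus_spikes (fstep lam g).
Proof.
move=> lam_ge0 g_ub qg.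
exact: eq_quadratic_plus_spikes (fun b => esym (fstep_max lam_ge0 g_ub b))
  (quadratic_plus_spikes_max _ qg).
Qed.

End Spikes.

Section DynamicProgramming.
Variables (R : realType) (ybar : nat -> R) (n : nat -> nat) (lam0 lam : R).
Hypotheses (lam0_ge0 : 0 <= lam0) (lam_ge0 : 0 <= lam).

Lemma efun_le_lam0 i x : efun ybar n lam0 i x <= lam0.
Proof.
have quad_le0 : - ((n i)%:R / 2) * (x - ybar i) ^+ 2 <= 0.
  by rewrite mulNr oppr_le0 mulr_ge0 ?sqr_ge0 ?divr_ge0 ?ler0n.
by rewrite /efun ler_wnDl ?mulr_ind_le.
Qed.

Lemma delta_ubound k : has_ubound (range (delta ybar n lam0 lam k)).
Proof.
elim: k => [|[|k] IH]; first by exists 0 => _ [x _ <-].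
  by exists lam0 => _ [x _ <-]; apply: efun_le_lam0.
have [M fstep_le_M] := fstep_ubound lam_ge0 IH.
exists (lam0 + M) => _ [x _ <-] /=; rewrite lerD ?efun_le_lam0 //.
by apply: fstep_le_M; exists x.
Qed.

Lemma delta_quadratic_plus_spikes k : (1 <= k)%N ->
  quadratic_plus_spikes (delta ybar n lam0 lam k).
Proof.
elim: k => [//|[|k] IH] _; first exact: quadratic_plus_spikes_efun.
apply: quadratic_plus_spikesD; first exact: quadratic_plus_spikes_efun.
exact: quadratic_plus_spikes_fstep (delta_ubound _) (IH isT).
Qed.

End DynamicProgramming.

Unset Implicit Arguments.

Theorem lemmaA1 (R : realType) (p : nat) (ybar : nat -> R) (n : nat -> nat)
  (lam0 lam : R) :
  (1 <= p)%N ->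
  (forall i, (1 <= i <= p)%N -> (1 <= n i)%N) ->
  0 <= lam0 -> 0 <= lam ->
  (forall k, (1 <= k <= p)%N -> classF (delta ybar n lam0 lam k)) /\
  (forall k, (2 <= k <= p)%N -> classF (fk ybar n lam0 lam k)).
Proof.
move=> _ _ lam0_ge0 lam_ge0; split=> k /andP [k_ge _]; apply: quadratic_plus_spikes_classF.
  exact: delta_quadratic_plus_spikes.
apply: quadratic_plus_spikes_fstep (delta_ubound _ _ _ _ _) _ => //.
by apply: delta_quadratic_plus_spikes; lia.
Qed.
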